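(* Let $S$ be a linear subspace of $\mathbb{F}_2^n$ with basis $\xi^1,\dots,\xi^d$, and suppose that for every nonzero $m\in\mathbb{F}_2^d$ there is a position $j\in\{1,\dots,n\}$ with $(\xi^1_j,\dots,\xi^d_j)=m$. Let $Q:\mathbb{F}_2^n\to\mathbb{F}_2$ be a quadratic function. If there exist complex phases $c_1,\dots,c_n$ such that $(-1)^{Q(x)}=\prod_{j=1}^n c_j^{x_j}$ for every $x\in S$, then there exist $c'_1,\dots,c'_n\in\{\pm1,\pm i\}$ such that $(-1)^{Q(x)}=\prod_{j=1}^n (c'_j)^{x_j}$ for every $x\in S$.
   Context: A quadratic function $Q:\mathbb{F}_2^n\to\mathbb{F}_2$ is a polynomial of degree at most $2$ in the coordinates with coefficients in $\mathbb{F}_2$. Complex phases are complex numbers of modulus $1$; coordinates $x_j\in\{0,1\}$ are used as integer exponents. *)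

From HB Require Import structures.
From mathcomp Require Import all_boot all_order all_algebra all_field.
From mathcomp Require Import reals.
From mathcomp Require Import complex.
Set Implicit Arguments. Unset Strict Implicit. Unset Printing Implicit Defensive.
Import Order.TTheory GRing.Theory Num.Theory.
Local Open Scope ring_scope.

Definition f2nat (a : 'F_2) : nat := ((a != 0)%R : bool).

Definition quadratic (n : nat) (Q : 'rV['F_2]_n -> 'F_2) : Prop :=
  exists (c0 : 'F_2) (a : 'I_n -> 'F_2) (b : 'I_n -> 'I_n -> 'F_2),
    forall x : 'rV['F_2]_n,
      Q x = c0 + \sum_(i < n) a i * x 0 i
               + \sum_(i < n) \sum_(j < n) b i j * x 0 i * x 0 j.

Definition phase_repr (R : rcfType) (n : nat) (Q : 'rV['F_2]_n -> 'F_2)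
    (c : 'I_n -> R[i]) (x : 'rV['F_2]_n) : Prop :=
  (-1) ^+ f2nat (Q x) = \prod_(j < n) (c j) ^+ f2nat (x 0 j).

From HB Require Import structures.
From mathcomp Require Import all_boot all_order all_algebra all_field.
From mathcomp Require Import reals.
From mathcomp Require Import complex.
Set Implicit Arguments. Unset Strict Implicit. Unset Printing Implicit Defensive.
Import Order.TTheory GRing.Theory Num.Theory.
Local Open Scope ring_scope.

(* Evaluating at x = 0 forces Q(0) = 0, so (-1)^Q is a product of factors
   (-1)^(a_i x_i) and (-1)^(b_ij x_i x_j).  The former are already of the
   required shape; for the latter, (-1)^(uv) = i^u i^v (-i)^(u xor v) for
   bits u, v, and on S the bit x_i + x_j is either identically 0 or equal to
   a single coordinate x_k, because the column of the basis matrix recording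
   it is nonzero and hence occurs among the columns by hypothesis. *)

Lemma F2_cases (a : 'F_2) : a = 0 \/ a = 1.
Proof.
case: a => [[|[|k]] lt_a2]; [left | right | ]; try exact: val_inj.
by move: lt_a2; rewrite pdiv_id.
Qed.

Lemma F2_add11 : (1 + 1 : 'F_2) = 0.
Proof. by apply/eqP. Qed.

Section Signs.
Variable C : comNzRingType.

Definition sign (a : 'F_2) : C := (-1) ^+ f2nat a.

Lemma sign0 : sign 0 = 1.
Proof. by rewrite /sign expr0. Qed.

Lemma signD a b : sign (a + b) = sign a * sign b.
Proof.
rewrite /sign; case: (F2_cases a) => ->; case: (F2_cases b) => ->;
by rewrite ?addr0 ?add0r ?F2_add11 ?expr0 ?expr1 ?mul1r ?mulr1 ?mulN1r ?opprK.
Qed.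

Lemma signM a y : sign (a * y) = sign a ^+ f2nat y.
Proof.
rewrite /sign; case: (F2_cases a) => ->; case: (F2_cases y) => ->;
by rewrite ?mul0r ?mulr0 ?mul1r ?mulr1 ?expr0 ?expr1 ?expr1n.
Qed.

Variable w : C.
Hypothesis sqr_w : w * w = -1.

Lemma sign_mul_bits (b u v : 'F_2) :
  let z := if b == 0 then 1 else w in
  let z' := if b == 0 then 1 else - w in
  sign (b * (u * v)) = z ^+ f2nat u * z ^+ f2nat v * z' ^+ f2nat (u + v).
Proof.
rewrite /sign; case: (F2_cases b) => ->; case: (F2_cases u) => ->;
case: (F2_cases v) => ->; rewrite /= ?mul0r ?mulr0 ?mul1r ?mulr1 ?addr0
  ?add0r ?F2_add11 ?expr0 ?expr1 ?expr1n ?mul1r ?mulr1 ?mulrN ?sqr_w ?opprK //.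
Qed.

End Signs.

Section GaussianProductForm.
Variables (R : rcfType) (n d : nat) (xi : 'M['F_2]_(d, n)).

Lemma mulii : 'i * 'i = -1 :> R[i].
Proof. exact: sqr_i. Qed.

Definition gauss_units : seq R[i] := [:: 1; -1; 'i; - 'i].

Lemma gauss_unitsM z z' :
  z \in gauss_units -> z' \in gauss_units -> z * z' \in gauss_units.
Proof.
rewrite /gauss_units !inE => /or4P [] /eqP -> /or4P [] /eqP ->;
by rewrite ?mul1r ?mulr1 ?mulN1r ?mulrN1 ?mulrN ?mulNr ?opprK ?mulii ?opprK
  ?inE eqxx ?orbT.
Qed.

Lemma sign_gauss_unit a : sign R[i] a \in gauss_units.
Proof.
by case: (F2_cases a) => ->;
  rewrite ?sign0 /sign ?expr1 /gauss_units !inE eqxx ?orbT.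
Qed.

Lemma gauss_unit_if (b : 'F_2) z : z \in gauss_units ->
  (if b == 0 then 1 else z) \in gauss_units.
Proof. by move=> z_unit; case: ifP => // _; apply: mem_head. Qed.

Definition gauss_prod_form (f : 'rV['F_2]_n -> R[i]) :=
  exists c : 'I_n -> R[i], (forall j, c j \in gauss_units) /\
    forall x, (x <= xi)%MS -> f x = \prod_(j < n) c j ^+ f2nat (x 0 j).

Lemma gauss_prod_form_ext f g : gauss_prod_form f ->
  (forall x, (x <= xi)%MS -> f x = g x) -> gauss_prod_form g.
Proof. by move=> [c [c_units fE]] fg; exists c; split=> // x Sx; rewrite -fg ?fE. Qed.

Lemma gauss_prod_form1 : gauss_prod_form (fun=> 1).
Proof.
exists (fun=> 1); split=> [j | x _]; first exact: mem_head.
by rewrite big1 // => j _; rewrite expr1n.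
Qed.

Lemma gauss_prod_formM f g : gauss_prod_form f -> gauss_prod_form g ->
  gauss_prod_form (fun x => f x * g x).
Proof.
move=> [c [c_units fE]] [c' [c'_units gE]].
exists (fun j => c j * c' j); split=> [j | x Sx]; first exact: gauss_unitsM.
by rewrite fE // gE // -big_split; apply: eq_bigr => j _; rewrite exprMn.
Qed.

Lemma gauss_prod_form_prod (I : Type) (r : seq I) (F : I -> 'rV['F_2]_n -> R[i]) :
  (forall i, gauss_prod_form (F i)) ->
  gauss_prod_form (fun x => \prod_(i <- r) F i x).
Proof.
move=> FP; elim: r => [|a r IHr].
  by apply: gauss_prod_form_ext gauss_prod_form1 _ => x _; rewrite big_nil.
apply: gauss_prod_form_ext (gauss_prod_formM (FP a) IHr) _ => x _.
by rewrite big_cons.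
Qed.

Lemma gauss_prod_form_coord z k : z \in gauss_units ->
  gauss_prod_form (fun x => z ^+ f2nat (x 0 k)).
Proof.
move=> z_unit; exists (fun j => if j == k then z else 1).
split=> [j | x _]; first by case: ifP => // _; apply: mem_head.
rewrite (bigD1 k) //= eqxx big1 ?mulr1 // => j /negbTE ->.
by rewrite expr1n.
Qed.

Hypothesis xi_columns : forall m : 'rV['F_2]_d, m != 0 ->
  exists j : 'I_n, forall k : 'I_d, xi k j = m 0 k.

Lemma gauss_prod_form_coordD z i j : z \in gauss_units ->
  gauss_prod_form (fun x => z ^+ f2nat (x 0 i + x 0 j)).
Proof.
move=> z_unit; pose v : 'rV['F_2]_d := \row_r (xi r i + xi r j).
have coordD (m : 'rV['F_2]_d) :
    (m *m xi) 0 i + (m *m xi) 0 j = \sum_r m 0 r * v 0 r.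
  by rewrite !mxE -big_split; apply: eq_bigr => r _; rewrite mxE mulrDr.
have [v0 | /xi_columns [k vE]] := eqVneq v 0.
  apply: gauss_prod_form_ext gauss_prod_form1 _ => _ /submxP [m ->].
  by rewrite coordD v0 big1 ?expr0 // => r _; rewrite mxE mulr0.
apply: gauss_prod_form_ext (gauss_prod_form_coord k z_unit) _ => _ /submxP [m ->].
by rewrite coordD mxE; congr (_ ^+ f2nat _); apply: eq_bigr => r _; rewrite vE.
Qed.

Lemma quadratic_sign_prod_form (Q : 'rV['F_2]_n -> 'F_2) :
  quadratic Q -> Q 0 = 0 -> gauss_prod_form (fun x => sign R[i] (Q x)).
Proof.
move=> [c0 [a [b QE]]] Q0.
have c0E : c0 = 0.
  rewrite -Q0 QE !big1 ?addr0 // => i _; last by rewrite mxE mulr0.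
  by rewrite big1 // => j _; rewrite !mxE !mulr0.
have signE x : sign R[i] (Q x) = \prod_(i < n) sign R[i] (a i * x 0 i)
    * \prod_(i < n) \prod_(j < n) sign R[i] (b i j * (x 0 i * x 0 j)).
  rewrite QE c0E add0r signD !(big_morph _ (@signD _) (sign0 _)).
  by congr (_ * _); apply: eq_bigr => i _;
    rewrite (big_morph _ (@signD _) (sign0 _)); apply: eq_bigr => j _;
    rewrite mulrA.
apply: gauss_prod_form_ext (gauss_prod_formM _ _) (fun x _ => esym (signE x)).
  apply: gauss_prod_form_prod => i.
  apply: gauss_prod_form_ext (gauss_prod_form_coord i (sign_gauss_unit (a i))) _.
  by move=> x _; rewrite signM.
apply: gauss_prod_form_prod => i; apply: gauss_prod_form_prod => j.
have unit_i : (if b i j == 0 then 1 else 'i) \in gauss_units.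
  by apply: gauss_unit_if; rewrite !inE eqxx ?orbT.
have unit_mi : (if b i j == 0 then 1 else - 'i) \in gauss_units.
  by apply: gauss_unit_if; rewrite !inE eqxx ?orbT.
apply: gauss_prod_form_ext (gauss_prod_formM (gauss_prod_formM
    (gauss_prod_form_coord i unit_i) (gauss_prod_form_coord j unit_i))
    (gauss_prod_form_coordD i j unit_mi)) _.
by move=> x _; rewrite (sign_mul_bits mulii).
Qed.

End GaussianProductForm.

Lemma phase_repr0 (R : rcfType) n (Q : 'rV['F_2]_n -> 'F_2) (c : 'I_n -> R[i]) :
  phase_repr Q c 0 -> Q 0 = 0.
Proof.
rewrite /phase_repr big1 => [|j _]; last by rewrite mxE expr0.
case: (F2_cases (Q 0)) => // ->; rewrite expr1 => /eqP.
by rewrite -subr_eq0 -opprD oppr_eq0 (_ : 1 + 1 = 2%:R) // pnatr_eq0.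
Qed.

Theorem mainTheorem4 (R : realType) (n d : nat) (xi : 'M['F_2]_(d, n))
    (Q : 'rV['F_2]_n -> 'F_2) :
  row_free xi ->
  (forall m : 'rV['F_2]_d, m != 0 -> exists j : 'I_n, forall k : 'I_d, xi k j = m 0 k) ->
  quadratic Q ->
  (exists c : 'I_n -> R[i],
      (forall j, `|c j| = 1) /\
      (forall x : 'rV['F_2]_n, (x <= xi)%MS -> phase_repr Q c x)) ->
  exists c' : 'I_n -> R[i],
      (forall j, c' j \in [:: 1; -1; 'i; - 'i]) /\
      (forall x : 'rV['F_2]_n, (x <= xi)%MS -> phase_repr Q c' x).
Proof.
move=> _ xi_columns Qquad [c [_ cQ]].
have Q0 : Q 0 = 0 by apply: phase_repr0 (cQ 0 (sub0mx _ _)).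
have [c' [c'_units c'Q]] := quadratic_sign_prod_form R xi_columns Qquad Q0.
by exists c'; split=> // x Sx; rewrite /phase_repr -c'Q.
Qed.
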